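(* Let $I_1\subset\mathbb{R}$ be an open interval and $I_2$ an open, relatively compact subinterval of $I_1$. For every integer $n\ge1$ and every $\varepsilon>0$ there exists $\delta>0$ such that for every $C^1$ map $h:I_1\to\mathbb{R}$ with $\|h-\mathrm{id}\|_{1,I_1}<\delta$ and every $x\in I_2$, the iterate $h^n(x)$ is defined and $$|(h^n(x)-x)-n(h(x)-x)|\le\varepsilon\,|h(x)-x|.$$
   Context: For an open set $J\subset\mathbb{R}$ and a $C^1$ map $u$ on $J$, $\|u\|_{1,J}=\sup_{x\in J}(|u(x)|+|u'(x)|)$. *)

From Stdlib Require Import Reals Lra.
Open Scope R_scope.

Definition is_open_interval (I : R -> Prop) : Prop :=
  (exists x, I x) /\
  (forall x y z, I x -> I z -> x <= y <= z -> I y) /\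
  (forall x, I x -> exists r, 0 < r /\ forall y, Rabs (y - x) < r -> I y).

(* I2 is relatively compact in I1: its closure (compact) lies in I1,
   i.e. I2 is contained in a compact segment [c,d] contained in I1. *)
Definition rel_compact_in (I2 I1 : R -> Prop) : Prop :=
  exists c d, (forall x, I2 x -> c <= x <= d) /\ (forall x, c <= x <= d -> I1 x).

Definition C1_on (J : R -> Prop) (h h' : R -> R) : Prop :=
  (forall x, J x -> derivable_pt_lim h x (h' x)) /\
  (forall x, J x -> continuity_pt h' x).

(* ||h - id||_{1,J} < delta, i.e. sup_{x in J} (|h x - x| + |h' x - 1|) < delta. *)
Definition C1_dist_id_lt (J : R -> Prop) (h h' : R -> R) (delta : R) : Prop :=
  exists M, M < delta /\ forall x, J x -> Rabs (h x - x) + Rabs (h' x - 1) <= M.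

Fixpoint iter_fun (n : nat) (h : R -> R) (x : R) : R :=
  match n with
  | O => x
  | S k => h (iter_fun k h x)
  end.

From Stdlib Require Import Reals Lra Lia.
Open Scope R_scope.

(* Write g = h - id and a = g x.  If ||h - id||_{1,I1} <= M then |g| <= M
   and, by the mean value theorem, g is M-Lipschitz on I1.  The orbit
   y_k = h^k x then satisfies
     (1) |y_k - x| <= k M, so for M small the first n iterates stay within
         distance r of a segment [c,d] containing I2, hence inside I1;
     (2) |y_k - x| <= (2^k - 1) |a|, since |g y_k| <= |a| + M |y_k - x|
         and M <= 1;
     (3) |(y_k - x) - k a| <= M k 2^k |a|, since the error grows at each
         step by |g y_k - a| <= M |y_k - x|.
   Choosing delta <= min(1, r/n, eps/(n 2^n)) turns (3) into the claim. *)

Lemma lipschitz_of_bounded_derivative (I : R -> Prop) (f f' : R -> R) (M : R) :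
  (forall x y z, I x -> I z -> x <= y <= z -> I y) ->
  (forall x, I x -> derivable_pt_lim f x (f' x)) ->
  (forall x, I x -> Rabs (f' x) <= M) ->
  forall u v, I u -> I v -> Rabs (f v - f u) <= M * Rabs (v - u).
Proof.
  intros Hconv Hder Hbound u v Hu Hv.
  assert (Hseg : forall c, Rmin u v <= c <= Rmax u v -> I c).
  { intros c Hc; unfold Rmin, Rmax in Hc; destruct (Rle_dec u v).
    - exact (Hconv u c v Hu Hv Hc).
    - exact (Hconv v c u Hv Hu Hc). }
  destruct (MVT_abs f f' u v (fun c Hc => Hder c (Hseg c Hc))) as [c [Heq Hc]].
  rewrite Heq; apply Rmult_le_compat_r; [apply Rabs_pos | exact (Hbound c (Hseg c Hc))].
Qed.

Lemma segment_thickening (I : R -> Prop) (c d : R) :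
  (forall x, I x -> exists r, 0 < r /\ forall y, Rabs (y - x) < r -> I y) ->
  (forall x, c <= x <= d -> I x) -> c <= d ->
  exists r, 0 < r /\ forall y, c - r <= y <= d + r -> I y.
Proof.
  intros Hopen Hseg Hcd.
  destruct (Hopen c (Hseg c ltac:(lra))) as [r1 [Hr1 Hball1]].
  destruct (Hopen d (Hseg d ltac:(lra))) as [r2 [Hr2 Hball2]].
  exists (Rmin r1 r2 / 2); split.
  - pose proof (Rmin_pos r1 r2 Hr1 Hr2); lra.
  - intros y Hy; pose proof (Rmin_l r1 r2); pose proof (Rmin_r r1 r2).
    destruct (Rle_dec c y); [destruct (Rle_dec y d) |].
    + apply Hseg; lra.
    + apply Hball2; rewrite Rabs_right; lra.
    + apply Hball1; rewrite Rabs_left; lra.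
Qed.

Lemma C1_dist_id_bound (I : R -> Prop) (h h' : R -> R) (delta : R) :
  (exists x, I x) -> C1_dist_id_lt I h h' delta ->
  exists M, 0 <= M < delta /\
    (forall z, I z -> Rabs (h z - z) <= M) /\
    (forall z, I z -> Rabs (h' z - 1) <= M).
Proof.
  intros [x0 Hx0] [M [HM Hbd]]; exists M.
  assert (Hparts : forall z, I z -> Rabs (h z - z) <= M /\ Rabs (h' z - 1) <= M).
  { intros z Hz; specialize (Hbd z Hz).
    pose proof (Rabs_pos (h z - z)); pose proof (Rabs_pos (h' z - 1)); lra. }
  split; [|split; intros z Hz; apply (Hparts z Hz)].
  pose proof (Rabs_pos (h x0 - x0)); destruct (Hparts x0 Hx0); lra.
Qed.

Lemma tolerance_choice (N K r eps : R) :
  1 <= N -> 0 < K -> 0 < r -> 0 < eps ->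
  exists delta, 0 < delta <= 1 /\ N * delta <= r /\ delta * K <= eps.
Proof.
  intros HN HK Hr Heps; exists (Rmin 1 (Rmin (r / N) (eps / K))).
  pose proof (Rmin_l 1 (Rmin (r / N) (eps / K))); pose proof (Rmin_r 1 (Rmin (r / N) (eps / K))).
  pose proof (Rmin_l (r / N) (eps / K)); pose proof (Rmin_r (r / N) (eps / K)).
  assert (N * (r / N) = r) by (field; lra).
  assert (eps / K * K = eps) by (field; lra).
  assert (0 < Rmin 1 (Rmin (r / N) (eps / K)))
    by (repeat apply Rmin_pos; try apply Rdiv_lt_0_compat; lra).
  repeat split; nra.
Qed.

Section Orbit.

Variables (J : R -> Prop) (h : R -> R) (M x : R) (n : nat).

Lemma iterates_stay_in :
  0 <= M ->
  (forall z, J z -> Rabs (h z - z) <= M) ->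
  (forall y, Rabs (y - x) <= INR n * M -> J y) ->
  forall k, (k <= n)%nat ->
    J (iter_fun k h x) /\ Rabs (iter_fun k h x - x) <= INR k * M.
Proof.
  intros HM Hmove Hball k; induction k as [|k IH]; intros Hk.
  - simpl; rewrite Rminus_diag, Rabs_R0, Rmult_0_l; split; [apply Hball|lra].
    rewrite Rminus_diag, Rabs_R0; apply Rmult_le_pos; [apply pos_INR | exact HM].
  - destruct (IH ltac:(lia)) as [Hin Hdist]; simpl iter_fun.
    set (y := iter_fun k h x) in *.
    assert (Hstep : Rabs (h y - x) <= INR (S k) * M).
    { rewrite S_INR; replace (h y - x) with ((y - x) + (h y - y)) by ring.
      pose proof (Rabs_triang (y - x) (h y - y)); pose proof (Hmove y Hin); lra. }
    split; [apply Hball | exact Hstep].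
    assert (INR (S k) <= INR n) by (apply le_INR; lia); nra.
Qed.

Hypothesis M_range : 0 <= M <= 1.
Hypothesis displacement_lipschitz : forall u v, J u -> J v ->
  Rabs ((h v - v) - (h u - u)) <= M * Rabs (v - u).
Hypothesis orbit_in : forall k, (k <= n)%nat -> J (iter_fun k h x).

Lemma displacement_near_orbit (k : nat) : (k <= n)%nat ->
  Rabs ((h (iter_fun k h x) - iter_fun k h x) - (h x - x))
    <= M * Rabs (iter_fun k h x - x).
Proof. intros Hk; exact (displacement_lipschitz x _ (orbit_in 0 ltac:(lia)) (orbit_in k Hk)). Qed.

Lemma orbit_growth (k : nat) : (k <= n)%nat ->
  Rabs (iter_fun k h x - x) <= (2 ^ k - 1) * Rabs (h x - x).
Proof.
  induction k as [|k IH]; intros Hk.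
  - simpl; rewrite Rminus_diag, Rabs_R0; lra.
  - pose proof (IH ltac:(lia)) as Hdist; pose proof (displacement_near_orbit k ltac:(lia)).
    simpl iter_fun; simpl pow; set (y := iter_fun k h x) in *; set (a := h x - x) in *.
    replace (h y - x) with ((y - x) + (h y - y - a) + a) by (unfold a; ring).
    pose proof (Rabs_triang (y - x + (h y - y - a)) a).
    pose proof (Rabs_triang (y - x) (h y - y - a)).
    pose proof (Rabs_pos (y - x)).
    assert (M * Rabs (y - x) <= Rabs (y - x)) by nra; lra.
Qed.

Lemma orbit_linear_error (k : nat) : (k <= n)%nat ->
  Rabs ((iter_fun k h x - x) - INR k * (h x - x)) <= M * INR k * 2 ^ k * Rabs (h x - x).
Proof.
  induction k as [|k IH]; intros Hk.
  - simpl; rewrite Rminus_diag, Rmult_0_l, Rminus_0_r, Rabs_R0; lra.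
  - pose proof (IH ltac:(lia)) as Herr; pose proof (displacement_near_orbit k ltac:(lia)).
    pose proof (orbit_growth k ltac:(lia)) as Hdist.
    simpl iter_fun; simpl pow; rewrite S_INR.
    set (y := iter_fun k h x) in *; set (a := h x - x) in *.
    replace (h y - x - (INR k + 1) * a) with ((y - x - INR k * a) + (h y - y - a))
      by (unfold a; ring).
    pose proof (Rabs_triang (y - x - INR k * a) (h y - y - a)).
    pose proof (Rabs_pos a); pose proof (pos_INR k).
    assert (1 <= 2 ^ k) by (apply pow_R1_Rle; lra).
    assert (M * Rabs (y - x) <= M * (2 ^ k * Rabs a)) by nra.
    assert (0 <= M * (INR k + 1) * 2 ^ k * Rabs a) by (repeat apply Rmult_le_pos; lra).
    lra.
Qed.

End Orbit.

Theorem lemma3p10 (I1 I2 : R -> Prop) :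
  is_open_interval I1 -> is_open_interval I2 ->
  (forall x, I2 x -> I1 x) -> rel_compact_in I2 I1 ->
  forall (n : nat), (1 <= n)%nat ->
  forall eps : R, 0 < eps ->
  exists delta : R, 0 < delta /\
    forall h h' : R -> R,
      C1_on I1 h h' -> C1_dist_id_lt I1 h h' delta ->
      forall x, I2 x ->
        (forall k, (k < n)%nat -> I1 (iter_fun k h x)) /\
        Rabs ((iter_fun n h x - x) - INR n * (h x - x)) <= eps * Rabs (h x - x).
Proof.
  intros [Hne [Hconv Hopen]] [[y0 Hy0] _] _ [c [d [HI2 HI1]]] n Hn eps Heps.
  destruct (segment_thickening I1 c d Hopen HI1 ltac:(specialize (HI2 y0 Hy0); lra))
    as [r [Hr Hthick]].
  assert (HN : 1 <= INR n) by (apply (le_INR 1); exact Hn).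
  assert (HK : 1 <= INR n * 2 ^ n) by (pose proof (pow_R1_Rle 2 n ltac:(lra)); nra).
  set (K := INR n * 2 ^ n) in HK |- *.
  destruct (tolerance_choice (INR n) K r eps HN ltac:(lra) Hr Heps) as [delta Hdelta].
  exists delta; split; [lra|].
  intros h h' [Hder _] Hdist x Hx.
  destruct (C1_dist_id_bound I1 h h' delta Hne Hdist) as [M [HM [Hmove Hslope]]].
  assert (Hlip := lipschitz_of_bounded_derivative I1 (fun z => h z - z) (fun z => h' z - 1) M
    Hconv (fun z Hz => derivable_pt_lim_minus h id z _ _ (Hder z Hz) (derivable_pt_lim_id z))
    Hslope).
  assert (Hball : forall y, Rabs (y - x) <= INR n * M -> I1 y).
  { intros y Hy; apply Hthick; pose proof (HI2 x Hx).
    unfold Rabs in Hy; destruct (Rcase_abs (y - x)); nra. }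
  assert (Horbit : forall k, (k <= n)%nat -> I1 (iter_fun k h x))
    by (intros k Hk; apply (iterates_stay_in I1 h M x n ltac:(lra) Hmove Hball k Hk)).
  split; [intros k Hk; apply Horbit; lia|].
  eapply Rle_trans; [apply (orbit_linear_error I1 h M x n ltac:(lra) Hlip Horbit n (le_n n))|].
  apply Rmult_le_compat_r; [apply Rabs_pos|].
  replace (M * INR n * 2 ^ n) with (M * K) by (unfold K; ring); nra.
Qed.
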